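(* Let $\mathcal{V}$ be a pseudo-variety of $\mathbb{M}$-algebras and let $\mathcal{K}$ be the family of languages assigning to each alphabet $\Sigma$ the class of all languages over $\Sigma$ recognised by some algebra in $\mathcal{V}$. Then $\mathcal{K}$ is a variety of languages.
   Context: Fix a set $\Xi$ of sorts; $\mathsf{Pos}^\Xi$ is the category of $\Xi$-sorted families of partial orders with sort-wise monotone maps. $\mathbb{M}$ is a monad on $\mathsf{Pos}^\Xi$ ($\mathrm{flat},\mathrm{sing}$) preserving injective, surjective, bijective functions and preimages and using the standard ordering (order on $\mathbb{M}A$ is $\{(\mathbb{M}p(u),\mathbb{M}q(u)):u\in\mathbb{M}R\}$, $R$ the order of $A$). $\mathbb{M}$-algebras $\langle A,\pi\rangle$ satisfy $\pi\circ\mathbb{M}\pi=\pi\circ\mathrm{flat}$, $\pi\circ\mathrm{sing}=\mathrm{id}$; morphisms commute with products. An algebra is finitary if each $A_\xi$ is finite and it is generated by a finite $C\subseteq A$ (every element is $\pi(s)$ with $s\in\mathbb{M}C$). A quotient of $\mathfrak{B}$ is an algebra $\mathfrak{A}$ admitting a surjective morphism $\mathfrak{B}\to\mathfrak{A}$. For $\Delta\subseteq\Xi$, $A|_\Delta$ is the part of $A$ with sorts in $\Delta$, $\mathbb{M}|_\Delta A:=(\mathbb{M}(A|_\Delta))|_\Delta$ (a monad on $\mathsf{Pos}^\Delta$), and $\mathfrak{A}|_\Delta$ is the $\mathbb{M}|_\Delta$-algebra with universe $A|_\Delta$ and product the restriction of $\pi$ to $\mathbb{M}|_\Delta A$. An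 algebra $\mathfrak{B}$ is a sort-accumulation point of a class $\mathcal{A}$ if for every finite $\Delta\subseteq\Xi$ there is $\mathfrak{A}\in\mathcal{A}$ such that $\mathfrak{B}|_\Delta$ is a quotient of $\mathfrak{A}|_\Delta$ (as $\mathbb{M}|_\Delta$-algebras). A class $\mathcal{V}$ of finitary algebras is a pseudo-variety if it is closed under quotients, finitary subalgebras of finite products, and (finitary) sort-accumulation points. An alphabet is a finite unordered set $\Sigma$; a language is $K\subseteq\mathbb{M}_\xi\Sigma$; an algebra $\mathfrak{A}$ recognises $K$ if $K=\varphi^{-1}[P]$ for some morphism $\varphi:\mathbb{M}\Sigma\to\mathfrak{A}$ and upwards closed $P\subseteq A_\xi$. Contexts with hole of sort $\zeta$: $p\in\mathbb{M}(\Sigma+\{\Box\})$ with $\Box$ new of sort $\zeta$; $p[s]$ is the image of $p$ under the algebra morphism extending $\Box\mapsto s$, $c\mapsto\mathrm{sing}(c)$; derivative $p^{-1}[K]=\{s:p[s]\in K\}$. A variety of languages is a family $\mathcal{K}$ assigning to each alphabet $\Sigma$ a class $\mathcal{K}[\Sigma]$ of languages over $\Sigma$ closed under finite unions and intersections, inverse morphisms ($\psi^{-1}[K]\in\mathcal{K}[\Sigma]$ for $K\in\mathcal{K}[\Gamma]$ and algebra morphisms $\psi:\mathbb{M}\Sigma\to\mathbb{M}\Gamma$), and derivatives ($p^{-1}[K]\in\mathcal{K}[\Sigma]$ for $K\in\mathcal{K}[\Sigma]$ and contexts $p$). *)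

From Stdlib Require Import List ProofIrrelevance.
Set Implicit Arguments.
Unset Strict Implicit.

Section Defs.
Variable Xi : Type.

Record SPos := {
  car :> Xi -> Type;
  le : forall x, car x -> car x -> Prop;
  le_refl : forall x (a : car x), le a a;
  le_trans : forall x (a b c : car x), le a b -> le b c -> le a c;
  le_antisym : forall x (a b : car x), le a b -> le b a -> a = b }.

Record Hom (A B : SPos) := {
  fn :> forall x, A x -> B x;
  fn_mono : forall x (a b : A x), le a b -> le (fn a) (fn b) }.

Definition Hom_id (A : SPos) : Hom A A.
Proof. exists (fun x a => a). auto. Defined.

Definition Hom_comp (A B C : SPos) (g : Hom B C) (f : Hom A B) : Hom A C.
Proof. exists (fun x a => g x (f x a)). intros x a b h. apply fn_mono, fn_mono, h. Defined.

Definition sub (A : SPos) (C : forall x, A x -> Prop) : SPos.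
Proof.
  refine {| car := fun x => { a : A x | C x a };
            le := fun x a b => le (proj1_sig a) (proj1_sig b) |}.
  - intros; apply le_refl.
  - intros x a b c; apply le_trans.
  - intros x [a Ha] [b Hb] h1 h2; simpl in *.
    assert (a = b) by (apply le_antisym; auto). subst b.
    f_equal; apply proof_irrelevance.
Defined.

Definition incl (A : SPos) (C : forall x, A x -> Prop) : Hom (sub C) A.
Proof. exists (fun x a => proj1_sig a). auto. Defined.

Definition prodP (A B : SPos) : SPos.
Proof.
  refine {| car := fun x => (A x * B x)%type;
            le := fun x a b => le (fst a) (fst b) /\ le (snd a) (snd b) |}.
  - intros; split; apply le_refl.
  - intros x a b c [] []; split; eapply le_trans; eauto.
  - intros x [a1 a2] [b1 b2] [] []; simpl in *; f_equal; apply le_antisym; auto.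
Defined.

Definition ordrel (A : SPos) : SPos :=
  sub (A := prodP A A) (fun x pr => le (fst pr) (snd pr)).

Definition ordp (A : SPos) : Hom (ordrel A) A.
Proof. exists (fun x r => fst (proj1_sig r)). intros x a b []; auto. Defined.
Definition ordq (A : SPos) : Hom (ordrel A) A.
Proof. exists (fun x r => snd (proj1_sig r)). intros x a b []; auto. Defined.

Definition discrete (T : Xi -> Type) : SPos.
Proof.
  refine {| car := T; le := fun x a b => a = b |}; intros; subst; auto.
Defined.

Definition injective_on (T U : Type) (f : T -> U) := forall a b, f a = f b -> a = b.
Definition surjective_on (T U : Type) (f : T -> U) := forall b, exists a, f a = b.

Record Monad := {
  Mo : SPos -> SPos;
  Mf : forall A B, Hom A B -> Hom (Mo A) (Mo B);
  flat : forall A, Hom (Mo (Mo A)) (Mo A);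
  sing : forall A, Hom A (Mo A);
  Mf_id : forall A x (u : Mo A x), Mf (Hom_id A) x u = u;
  Mf_comp : forall A B C (g : Hom B C) (f : Hom A B) x (u : Mo A x),
      Mf (Hom_comp g f) x u = Mf g x (Mf f x u);
  flat_nat : forall A B (f : Hom A B) x (u : Mo (Mo A) x),
      Mf f x (flat A x u) = flat B x (Mf (Mf f) x u);
  sing_nat : forall A B (f : Hom A B) x (a : A x),
      Mf f x (sing A x a) = sing B x (f x a);
  flat_sing : forall A x (u : Mo A x), flat A x (sing (Mo A) x u) = u;
  flat_Msing : forall A x (u : Mo A x), flat A x (Mf (sing A) x u) = u;
  flat_flat : forall A x (u : Mo (Mo (Mo A)) x),
      flat A x (flat (Mo A) x u) = flat A x (Mf (flat A) x u);
  M_inj : forall A B (f : Hom A B),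
      (forall x, injective_on (f x)) -> forall x, injective_on (Mf f x);
  M_surj : forall A B (f : Hom A B),
      (forall x, surjective_on (f x)) -> forall x, surjective_on (Mf f x);
  M_bij : forall A B (f : Hom A B),
      (forall x, injective_on (f x) /\ surjective_on (f x)) ->
      forall x, injective_on (Mf f x) /\ surjective_on (Mf f x);
  (* preservation of preimages: M(f^-1[C]) = (Mf)^-1[M C],
     subobjects being identified with their images under M(incl) *)
  M_preim : forall A B (f : Hom A B) (C : forall x, B x -> Prop) x (u : Mo A x),
      (exists v : Mo (sub (fun y a => C y (f y a))) x, Mf (incl _) x v = u) <->
      (exists w : Mo (sub C) x, Mf (incl C) x w = Mf f x u);
  M_order : forall A x (s t : Mo A x),
      le s t <-> exists u : Mo (ordrel A) x,
                   Mf (ordp A) x u = s /\ Mf (ordq A) x u = t }.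

Variable M : Monad.

Record algebra := {
  acar : SPos;
  api : Hom (Mo M acar) acar;
  api_assoc : forall x (u : Mo M (Mo M acar) x),
      api x (Mf M api x u) = api x (flat M acar x u);
  api_unit : forall x (a : acar x), api x (sing M acar x a) = a }.

Definition is_morph (A B : algebra) (h : Hom (acar A) (acar B)) : Prop :=
  forall x (s : Mo M (acar A) x), h x (api A x s) = api B x (Mf M h x s).

Definition free (S : SPos) : algebra.
Proof.
  refine {| acar := Mo M S; api := flat M S |}.
  - intros; symmetry; apply flat_flat.
  - intros; apply flat_sing.
Defined.

Definition finite_type (T : Type) := exists l : list T, forall a, In a l.
Definition finite_subset (A : SPos) (C : forall x, A x -> Prop) :=
  exists l : list {x : Xi & A x}, forall x a, C x a -> In (existT _ x a) l.

Definition finitary (A : algebra) : Prop :=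
  (forall x, finite_type (acar A x)) /\
  exists C : forall x, acar A x -> Prop, finite_subset C /\
    forall x (a : acar A x), exists s : Mo M (sub C) x,
      api A x (Mf M (incl C) x s) = a.

Definition quotient_of (A B : algebra) : Prop :=
  exists h : Hom (acar B) (acar A), is_morph h /\ forall x, surjective_on (h x).

(** Restriction to a set of sorts Delta: A|_Delta (empty outside Delta). *)
Definition restr (D : Xi -> Prop) (A : SPos) : SPos := sub (A := A) (fun x _ => D x).

(** B|_D is a quotient of A|_D as M|_D-algebras: a surjective monotone map
    h : A|_D -> B|_D commuting with the restricted products
    (pi restricted to M|_D A, i.e. pi o M(incl) at sorts in D). *)
Definition restr_quotient (D : Xi -> Prop) (A B : algebra) : Prop :=
  exists h : Hom (restr D (acar A)) (restr D (acar B)),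
    (forall x, D x -> surjective_on (h x)) /\
    forall x (dx : D x) (s : Mo M (restr D (acar A)) x),
      proj1_sig (h x (exist _ (api A x (Mf M (incl _) x s)) dx)) =
      api B x (Mf M (incl _) x (Mf M h x s)).

Definition sort_accumulation_point (V : algebra -> Prop) (B : algebra) : Prop :=
  forall D : Xi -> Prop, (exists l : list Xi, forall x, D x -> In x l) ->
    exists A, V A /\ restr_quotient D A B.

(** Closure under finitary subalgebras of finite products is
    stated up to isomorphism: A is (isomorphic to) a subalgebra of the product
    of the F i iff there are morphisms h i : A -> F i that jointly form an
    order embedding into the product. *)
Definition pseudo_variety (V : algebra -> Prop) : Prop :=
  (forall A, V A -> finitary A) /\
  (forall A B, V A -> quotient_of B A -> V B) /\
  (forall (I : Type) (F : I -> algebra) (A : algebra)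
          (h : forall i, Hom (acar A) (acar (F i))),
     finite_type I -> (forall i, V (F i)) -> (forall i, is_morph (h i)) ->
     (forall x (a b : acar A x), le a b <-> forall i, le (h i x a) (h i x b)) ->
     finitary A -> V A) /\
  (forall B, finitary B -> sort_accumulation_point V B -> V B).

Definition alphabet (S : SPos) : Prop :=
  (forall x (a b : S x), le a b <-> a = b) /\
  exists l : list {x : Xi & S x}, forall x a, In (existT _ x a) l.

Definition recognises (A : algebra) (S : SPos) (xi : Xi) (K : Mo M S xi -> Prop) :=
  exists phi : Hom (Mo M S) (acar A), is_morph (A := free S) (B := A) phi /\
  exists P : acar A xi -> Prop,
    (forall a b, P a -> le a b -> P b) /\
    forall s, K s <-> P (phi xi s).

Definition lang_family := forall (S : SPos) (xi : Xi), (Mo M S xi -> Prop) -> Prop.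

Definition recognised_by (V : algebra -> Prop) : lang_family :=
  fun S xi K => exists A, V A /\ @recognises A S xi K.

(** Contexts: S + {hole}, the hole having sort zeta. *)
Definition holed (S : SPos) (zeta : Xi) : SPos :=
  discrete (fun x => (S x + (x = zeta))%type).

Definition hole_subst (S : SPos) (zeta : Xi) (s : Mo M S zeta) :
  Hom (holed S zeta) (Mo M S).
Proof.
  exists (fun x c => match c with
                     | inl a => sing M S x a
                     | inr e => eq_rect zeta (fun y => Mo M S y) s x (eq_sym e)
                     end).
  intros x a b h; simpl in h; subst; apply le_refl.
Defined.

(** p[s]: image of p under the algebra morphism M(S+hole) -> M S extending
    hole |-> s, c |-> sing c. *)
Definition fill (S : SPos) (zeta xi : Xi) (p : Mo M (holed S zeta) xi)
  (s : Mo M S zeta) : Mo M S xi :=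
  flat M S xi (Mf M (hole_subst s) xi p).

Definition variety_of_languages (K : lang_family) : Prop :=
  (forall S, alphabet S -> forall xi (L1 L2 : Mo M S xi -> Prop),
     K S xi L1 -> K S xi L2 -> K S xi (fun s => L1 s \/ L2 s)) /\
  (forall S, alphabet S -> forall xi (L1 L2 : Mo M S xi -> Prop),
     K S xi L1 -> K S xi L2 -> K S xi (fun s => L1 s /\ L2 s)) /\
  (forall S G, alphabet S -> alphabet G -> forall xi (L : Mo M G xi -> Prop)
     (psi : Hom (Mo M S) (Mo M G)), is_morph (A := free S) (B := free G) psi ->
     K G xi L -> K S xi (fun s => L (psi xi s))) /\
  (forall S, alphabet S -> forall zeta xi (L : Mo M S xi -> Prop)
     (p : Mo M (holed S zeta) xi),
     K S xi L -> K S zeta (fun s => L (fill p s))).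

End Defs.

From Stdlib Require Import FunctionalExtensionality ProofIrrelevance Classical List.
Set Implicit Arguments.
Unset Strict Implicit.

(* Languages recognised by A1, A2 in V via phi1, phi2 are both recognised by
   the image of the free algebra under <phi1, phi2> : M S -> A1 x A2, which is
   a finitary subalgebra of a finite product, hence in V; pulling the upward
   closed sets back along the projections gives unions and intersections.
   Inverse morphisms are handled by composition.  For a derivative, a context
   p acts on A by a |-> pi(p[a]); this map is monotone because M carries the
   standard ordering, and phi(p[s]) is its value at phi(s), so the derivative
   is recognised by the same algebra. *)

Lemma sig_eq (T : Type) (P : T -> Prop) (a b : {x : T | P x}) :
  proj1_sig a = proj1_sig b -> a = b.
Proof. destruct a, b; simpl; intro; subst; f_equal; apply proof_irrelevance. Qed.

Lemma finite_sig (T : Type) (P : T -> Prop) :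
  finite_type T -> finite_type {a : T | P a}.
Proof.
  intros [l Hl].
  assert (H : exists l' : list {a : T | P a},
             forall a (h : P a), In a l -> In (exist _ a h) l').
  { clear Hl. induction l as [|a l [l' IH]].
    - exists nil. intros a h [].
    - destruct (classic (P a)) as [ha|ha].
      + exists (exist _ a ha :: l'). intros b hb [E|E].
        * subst b. left. apply sig_eq. reflexivity.
        * right; auto.
      + exists l'. intros b hb [E|E]; [subst; contradiction|auto]. }
  destruct H as [l' H]. exists l'. intros [a h]. apply H, Hl.
Qed.

Lemma finite_prod (T U : Type) :
  finite_type T -> finite_type U -> finite_type (T * U).
Proof.
  intros [l1 H1] [l2 H2]. exists (list_prod l1 l2). intros [a b].
  apply in_prod; auto.
Qed.

Section Algebras.
Variable Xi : Type.

Lemma Hom_ext (A B : SPos Xi) (f g : Hom A B) :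
  (forall x a, f x a = g x a) -> f = g.
Proof.
  destruct f as [f hf], g as [g hg]; simpl; intro H.
  assert (f = g) by (apply functional_extensionality_dep; intro x;
    apply functional_extensionality; apply H).
  subst g. f_equal. apply proof_irrelevance.
Qed.

Definition hom_fst (A B : SPos Xi) : Hom (prodP A B) A.
Proof. exists (fun x p => fst p). intros x a b []; auto. Defined.

Definition hom_snd (A B : SPos Xi) : Hom (prodP A B) B.
Proof. exists (fun x p => snd p). intros x a b []; auto. Defined.

Definition hom_pair (A B C : SPos Xi) (f : Hom C A) (g : Hom C B) :
  Hom C (prodP A B).
Proof.
  exists (fun x c => (f x c, g x c)).
  intros x a b h; split; simpl; apply fn_mono; auto.
Defined.

Definition image (A B : SPos Xi) (f : Hom A B) (x : Xi) (b : B x) : Prop :=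
  exists a, f x a = b.

Definition corestr (A B : SPos Xi) (f : Hom A B) : Hom A (sub (image f)).
Proof.
  exists (fun x a => exist _ (f x a) (ex_intro _ a eq_refl)).
  intros x a b h; simpl. apply fn_mono, h.
Defined.

Lemma corestr_surj (A B : SPos Xi) (f : Hom A B) x :
  surjective_on (corestr f x).
Proof. intros [b [a Ha]]. exists a. apply sig_eq. exact Ha. Qed.

Variable M : Monad Xi.

Lemma Mf_comp_eq (A B B' C : SPos Xi)
  (g : Hom B C) (f : Hom A B) (g' : Hom B' C) (f' : Hom A B') :
  (forall x a, g x (f x a) = g' x (f' x a)) ->
  forall x u, Mf M g x (Mf M f x u) = Mf M g' x (Mf M f' x u).
Proof.
  intros H x u. rewrite <- !Mf_comp.
  replace (Hom_comp g f) with (Hom_comp g' f'); [reflexivity|].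
  apply Hom_ext. intros; simpl; symmetry; apply H.
Qed.

Lemma Mf_comp_ext (A B C : SPos Xi) (h : Hom A C) (g : Hom B C) (f : Hom A B) :
  (forall x a, h x a = g x (f x a)) ->
  forall x u, Mf M h x u = Mf M g x (Mf M f x u).
Proof.
  intros H x u. rewrite <- (Mf_id (m := M) u) at 1.
  apply Mf_comp_eq. intros; apply H.
Qed.

Lemma comp_morph (A B C : algebra M)
  (g : Hom (acar B) (acar C)) (f : Hom (acar A) (acar B)) :
  is_morph g -> is_morph f -> is_morph (Hom_comp g f).
Proof. intros hg hf x s. simpl. rewrite hf, hg, <- Mf_comp. reflexivity. Qed.

Section Product.
Variables A1 A2 : algebra M.

Definition prod_api :
  Hom (Mo M (prodP (acar A1) (acar A2))) (prodP (acar A1) (acar A2)) :=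
  hom_pair (Hom_comp (api A1) (Mf M (hom_fst _ _)))
           (Hom_comp (api A2) (Mf M (hom_snd _ _))).

Definition prod_algebra : algebra M.
Proof.
  refine {| acar := prodP (acar A1) (acar A2); api := prod_api |}.
  - intros x u. simpl. f_equal.
    + rewrite (@Mf_comp_eq _ _ _ _ (hom_fst _ _) prod_api (api A1) (Mf M (hom_fst _ _)))
        by reflexivity.
      rewrite api_assoc, <- flat_nat. reflexivity.
    + rewrite (@Mf_comp_eq _ _ _ _ (hom_snd _ _) prod_api (api A2) (Mf M (hom_snd _ _)))
        by reflexivity.
      rewrite api_assoc, <- flat_nat. reflexivity.
  - intros x [a1 a2]. simpl. rewrite !sing_nat. simpl. rewrite !api_unit.
    reflexivity.
Defined.

Lemma fst_morph : is_morph (A := prod_algebra) (hom_fst _ _).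
Proof. intros x s. reflexivity. Qed.

Lemma snd_morph : is_morph (A := prod_algebra) (hom_snd _ _).
Proof. intros x s. reflexivity. Qed.

Lemma pair_morph (A : algebra M)
  (f1 : Hom (acar A) (acar A1)) (f2 : Hom (acar A) (acar A2)) :
  is_morph f1 -> is_morph f2 -> is_morph (B := prod_algebra) (hom_pair f1 f2).
Proof.
  intros h1 h2 x s. simpl. rewrite h1, h2.
  f_equal; apply f_equal, Mf_comp_ext; reflexivity.
Qed.

End Product.

Section Subalgebra.
Variables (B : algebra M) (C : forall x, acar B x -> Prop).

Definition closed : Prop :=
  forall x (u : Mo M (sub C) x), @C x (api B x (Mf M (incl C) x u)).

Hypothesis closedC : closed.

Definition sub_api : Hom (Mo M (sub C)) (sub C).
Proof.
  exists (fun x u => exist _ (api B x (Mf M (incl C) x u)) (closedC u)).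
  intros x a b h; simpl. apply fn_mono, fn_mono, h.
Defined.

Definition subalgebra : algebra M.
Proof.
  refine {| acar := sub C; api := sub_api |}.
  - intros x u. apply sig_eq. simpl.
    rewrite (@Mf_comp_eq _ _ _ _ (incl C) sub_api (api B) (Mf M (incl C)))
      by reflexivity.
    rewrite api_assoc, <- flat_nat. reflexivity.
  - intros x a. apply sig_eq. simpl. rewrite sing_nat, api_unit. reflexivity.
Defined.

Lemma incl_morph : is_morph (A := subalgebra) (incl C).
Proof. intros x s. reflexivity. Qed.

End Subalgebra.

Section Image.
Variables (A B : algebra M) (f : Hom (acar A) (acar B)).
Hypothesis f_morph : is_morph f.

(* Every u in M(image f) lifts along the surjection M(corestr f). *)
Lemma image_closed : closed (image f).
Proof.
  intros x u.
  destruct (M_surj (@corestr_surj _ _ f) u) as [v Hv].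
  exists (api A x v). rewrite f_morph, <- Hv.
  f_equal. apply Mf_comp_ext. reflexivity.
Qed.

Definition image_algebra : algebra M := subalgebra image_closed.

Lemma corestr_morph : is_morph (B := image_algebra) (corestr f).
Proof.
  intros x s. apply sig_eq. simpl. rewrite f_morph.
  f_equal. apply Mf_comp_ext. reflexivity.
Qed.

End Image.

Definition generated_by (A : algebra M) (C : forall x, acar A x -> Prop) : Prop :=
  forall x (a : acar A x), exists s : Mo M (sub C) x,
    api A x (Mf M (incl C) x s) = a.
Arguments generated_by : clear implicits.

Definition finitely_generated (A : algebra M) : Prop :=
  exists C, finite_subset C /\ generated_by A C.

Lemma finitely_generated_free (S : SPos Xi) :
  (exists l : list {x : Xi & S x}, forall x a, In (existT _ x a) l) ->
  finitely_generated (free M S).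
Proof.
  intros [l Hl].
  set (C := fun x (s : Mo M S x) => exists a, sing M S x a = s).
  exists C. split.
  - exists (map (fun p => existT (fun x => Mo M S x) (projT1 p)
                              (sing M S _ (projT2 p))) l).
    intros x s [a <-].
    exact (in_map (fun p => existT (fun x => Mo M S x) (projT1 p)
                              (sing M S _ (projT2 p))) l (existT _ x a) (Hl x a)).
  - set (r := @Build_Hom _ S (sub C)
                (fun x a => exist _ (sing M S x a) (ex_intro _ a eq_refl))
                (fun x a b h => fn_mono (sing M S) h)).
    intros x s. exists (Mf M r x s). simpl.
    rewrite <- (@Mf_comp_ext _ _ _ (sing M S) (incl C) r) by reflexivity.
    apply flat_Msing.
Qed.

Lemma finitely_generated_image (A B : algebra M) (f : Hom (acar A) (acar B))
  (f_morph : is_morph f) :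
  finitely_generated A -> finitely_generated (image_algebra f_morph).
Proof.
  intros [C [[l Hl] HC]].
  set (C' := fun x (b : sub (image f) x) =>
               exists a, C x a /\ corestr f x a = b).
  exists C'. split.
  - exists (map (fun p => existT (fun x => sub (image f) x) (projT1 p)
                              (corestr f _ (projT2 p))) l).
    intros x b [a [Ca <-]].
    exact (in_map (fun p => existT (fun x => sub (image f) x) (projT1 p)
                     (corestr f _ (projT2 p))) l (existT _ x a) (Hl x a Ca)).
  - set (r := @Build_Hom _ (sub C) (sub C')
                (fun x c => exist _ (corestr f x (proj1_sig c))
                              (ex_intro _ (proj1_sig c) (conj (proj2_sig c) eq_refl)))
                (fun x a b h => fn_mono (corestr f) h)).
    intros x [b [a <-]]. destruct (HC x a) as [s <-].
    exists (Mf M r x s). apply sig_eq. simpl.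
    rewrite f_morph, <- !Mf_comp. reflexivity.
Qed.

Lemma image_finitary (A B : algebra M) (f : Hom (acar A) (acar B))
  (f_morph : is_morph f) :
  (forall x, finite_type (acar B x)) -> finitely_generated A ->
  finitary (image_algebra f_morph).
Proof.
  intros finB genA. split.
  - intros x. apply finite_sig, finB.
  - exact (finitely_generated_image f_morph genA).
Qed.

Section PseudoVariety.
Variable V : algebra M -> Prop.
Hypothesis pvV : pseudo_variety V.

Lemma pseudo_variety_subprod2 (A A1 A2 : algebra M)
  (h1 : Hom (acar A) (acar A1)) (h2 : Hom (acar A) (acar A2)) :
  V A1 -> V A2 -> is_morph h1 -> is_morph h2 ->
  (forall x (a b : acar A x), le a b <-> le (h1 x a) (h1 x b) /\ le (h2 x a) (h2 x b)) ->
  finitary A -> V A.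
Proof.
  intros V1 V2 m1 m2 emb finA.
  destruct pvV as [_ [_ [Hsub _]]].
  set (F := fun b : bool => if b then A1 else A2).
  apply (Hsub bool F A (fun i => match i return Hom (acar A) (acar (F i)) with
                                 | true => h1 | false => h2 end)).
  - exists (true :: false :: nil). intros [|]; simpl; auto.
  - intros [|]; assumption.
  - intros [|]; assumption.
  - intros x a b. rewrite emb. split.
    + intros [] [|]; assumption.
    + intros H. exact (conj (H true) (H false)).
  - exact finA.
Qed.

Lemma pseudo_variety_image_pair (A A1 A2 : algebra M)
  (f1 : Hom (acar A) (acar A1)) (f2 : Hom (acar A) (acar A2))
  (m1 : is_morph f1) (m2 : is_morph f2) :
  V A1 -> V A2 -> finitely_generated A ->
  V (image_algebra (pair_morph m1 m2)).
Proof.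
  intros V1 V2 genA.
  destruct pvV as [Hfin _].
  apply (@pseudo_variety_subprod2 (image_algebra (pair_morph m1 m2)) A1 A2
           (Hom_comp (hom_fst _ _) (incl _)) (Hom_comp (hom_snd _ _) (incl _))
           V1 V2).
  - exact (@comp_morph _ (prod_algebra A1 A2) _ _ _ (@fst_morph A1 A2)
             (incl_morph (closedC := image_closed (pair_morph m1 m2)))).
  - exact (@comp_morph _ (prod_algebra A1 A2) _ _ _ (@snd_morph A1 A2)
             (incl_morph (closedC := image_closed (pair_morph m1 m2)))).
  - intros x a b. reflexivity.
  - apply image_finitary; [|exact genA].
    intros x. apply finite_prod; [apply (proj1 (Hfin _ V1)) | apply (proj1 (Hfin _ V2))].
Qed.

End PseudoVariety.

Definition upward (A : SPos Xi) (xi : Xi) (P : A xi -> Prop) : Prop :=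
  forall a b, P a -> le a b -> P b.

Definition recognises_via (S : SPos Xi) (A : algebra M)
  (phi : Hom (Mo M S) (acar A)) (xi : Xi) (K : Mo M S xi -> Prop) : Prop :=
  exists P : acar A xi -> Prop, upward P /\ forall s, K s <-> P (phi xi s).

Lemma recognises_via_factor (S : SPos Xi) (A B : algebra M)
  (phi : Hom (Mo M S) (acar A)) (psi : Hom (Mo M S) (acar B))
  (g : Hom (acar B) (acar A)) xi (K : Mo M S xi -> Prop) :
  (forall s, g xi (psi xi s) = phi xi s) ->
  recognises_via phi K -> recognises_via psi K.
Proof.
  intros E [P [HP HK]]. exists (fun b => P (g xi b)). split.
  - intros a b Pa hab. apply (HP _ _ Pa), fn_mono, hab.
  - intros s. rewrite E. apply HK.
Qed.

Lemma recognises_via_combine (op : Prop -> Prop -> Prop)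
  (op_mono : forall p q p' q', (p -> p') -> (q -> q') -> op p q -> op p' q')
  (S : SPos Xi) (A : algebra M) (phi : Hom (Mo M S) (acar A)) xi
  (L1 L2 : Mo M S xi -> Prop) :
  recognises_via phi L1 -> recognises_via phi L2 ->
  recognises_via phi (fun s => op (L1 s) (L2 s)).
Proof.
  intros [P1 [HP1 HL1]] [P2 [HP2 HL2]].
  exists (fun a => op (P1 a) (P2 a)). split.
  - intros a b H hab. revert H.
    apply op_mono; intro; [eapply HP1 | eapply HP2]; eassumption.
  - intros s. split; apply op_mono; intro; first [apply HL1 | apply HL2]; assumption.
Qed.

Lemma recognises_via_comap (S G : SPos Xi) (A : algebra M)
  (phi : Hom (Mo M G) (acar A)) (psi : Hom (Mo M S) (Mo M G)) xi
  (L : Mo M G xi -> Prop) :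
  recognises_via phi L -> recognises_via (Hom_comp phi psi) (fun s => L (psi xi s)).
Proof. intros [P [HP HL]]. exists P. split; [exact HP | intros s; apply HL]. Qed.

Lemma recognised_by_combine (V : algebra M -> Prop) (op : Prop -> Prop -> Prop)
  (op_mono : forall p q p' q', (p -> p') -> (q -> q') -> op p q -> op p' q')
  (S : SPos Xi) xi (L1 L2 : Mo M S xi -> Prop) :
  pseudo_variety V ->
  (exists l : list {x : Xi & S x}, forall x a, In (existT _ x a) l) ->
  recognised_by V L1 -> recognised_by V L2 ->
  recognised_by V (fun s => op (L1 s) (L2 s)).
Proof.
  intros pvV finS [A1 [V1 [phi1 [m1 R1]]]] [A2 [V2 [phi2 [m2 R2]]]].
  set (B := image_algebra (pair_morph m1 m2)).
  exists B. split.
  - apply pseudo_variety_image_pair; [exact pvV | exact V1 | exact V2 |].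
    apply finitely_generated_free, finS.
  - exists (corestr _). split; [apply corestr_morph|].
    apply recognises_via_combine; [exact op_mono | |].
    + apply (@recognises_via_factor S A1 B phi1 (corestr _)
               (Hom_comp (hom_fst _ _) (incl _))); [reflexivity | exact R1].
    + apply (@recognises_via_factor S A2 B phi2 (corestr _)
               (Hom_comp (hom_snd _ _) (incl _))); [reflexivity | exact R2].
Qed.

Section Contexts.
Variables (S : SPos Xi) (A : algebra M) (phi : Hom (Mo M S) (acar A)) (zeta : Xi).

Definition plug (a : acar A zeta) : Hom (holed S zeta) (acar A).
Proof.
  exists (fun x c => match c with
                     | inl c0 => phi x (sing M S x c0)
                     | inr e => eq_rect zeta (fun y => acar A y) a x (eq_sym e)
                     end).
  intros x c d h; simpl in h; subst; apply le_refl.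
Defined.

Definition plug_le (a b : acar A zeta) (hab : le a b) :
  Hom (holed S zeta) (ordrel (acar A)).
Proof.
  unshelve eexists (fun x c => exist _ (plug a x c, plug b x c) _).
  - destruct c as [c0|e]; simpl.
    + apply le_refl.
    + destruct e. exact hab.
  - intros x c d h; simpl in h; subst; apply le_refl.
Defined.

Definition context_action xi (p : Mo M (holed S zeta) xi) (a : acar A zeta) :
  acar A xi :=
  api A xi (Mf M (plug a) xi p).

(* By the standard ordering, M(plug a) p <= M(plug b) p is witnessed by
   M(plug_le hab) p. *)
Lemma context_action_mono xi (p : Mo M (holed S zeta) xi) a b :
  le a b -> le (context_action p a) (context_action p b).
Proof.
  intros hab. apply fn_mono, M_order.
  exists (Mf M (plug_le hab) xi p).
  split; symmetry; apply Mf_comp_ext; reflexivity.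
Qed.

Hypothesis phi_morph : is_morph (A := free M S) phi.

Lemma morph_fill xi (p : Mo M (holed S zeta) xi) (s : Mo M S zeta) :
  phi xi (fill p s) = context_action p (phi zeta s).
Proof.
  unfold fill, context_action.
  change (phi xi (api (free M S) xi (Mf M (hole_subst s) xi p)) =
          api A xi (Mf M (plug (phi zeta s)) xi p)).
  rewrite phi_morph. f_equal. symmetry.
  apply Mf_comp_ext. intros x [c0|e]; [reflexivity | subst x; reflexivity].
Qed.

Lemma recognises_via_fill xi (p : Mo M (holed S zeta) xi) (L : Mo M S xi -> Prop) :
  recognises_via phi L -> recognises_via phi (fun s => L (fill p s)).
Proof.
  intros [P [HP HL]]. exists (fun a => P (context_action p a)). split.
  - intros a b Pa hab. exact (HP _ _ Pa (context_action_mono p hab)).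
  - intros s. rewrite <- morph_fill. apply HL.
Qed.

End Contexts.

End Algebras.

Theorem proposition5p6 (Xi : Type) (M : Monad Xi) (V : algebra M -> Prop) :
  pseudo_variety V -> variety_of_languages (recognised_by V).
Proof.
  intros pvV. split; [|split; [|split]].
  - intros S [_ finS] xi L1 L2.
    apply recognised_by_combine; [intros; tauto | exact pvV | exact finS].
  - intros S [_ finS] xi L1 L2.
    apply recognised_by_combine; [intros; tauto | exact pvV | exact finS].
  - intros S G _ _ xi L psi psi_morph [A [VA [phi [phi_morph R]]]].
    exists A. split; [exact VA|]. exists (Hom_comp phi psi).
    split; [exact (comp_morph phi_morph psi_morph) | exact (recognises_via_comap psi R)].
  - intros S _ zeta xi L p [A [VA [phi [phi_morph R]]]].
    exists A. split; [exact VA|]. exists phi.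
    split; [exact phi_morph | exact (recognises_via_fill phi_morph p R)].
Qed.
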